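(* For every natural number $m$, $$s(m)=\left|\{\sigma\in S_\infty:\ \mathcal{LF}_2(\sigma)=m\}\right|.$$
   Context: $S_n$ is the group of permutations of $[n]=\{1,\dots,n\}$. For $\sigma\in S_n$ and $i\in[n]$, $c_i(\sigma)=|\{j\in[n]: j>i,\ \sigma(j)<\sigma(i)\}|$, $k_i(\sigma)=c_{n-i}(\sigma)$ for $i=0,\dots,n-1$, and $\mathcal{LF}_2(\sigma)=\sum_{i=0}^{n-1}[2^i-2^{i-k_i(\sigma)}]$. Let $\iota_n:S_n\to S_{n+1}$, $\iota_n(\sigma)=(1,\sigma(1)+1,\dots,\sigma(n)+1)$; it preserves $\mathcal{LF}_2$. Here $S_\infty$ is the direct limit of $(S_n,\iota_n)_{n\ge1}$ (which is isomorphic to the group of finitely supported permutations of the positive integers), and $\mathcal{LF}_2$ is the induced function on $S_\infty$. For $m>0$ and $k\ge0$, $S_k(m)$ is the set of all sequences $((m_1,l_1),\dots,(m_t,l_t))$, $t\ge1$, of pairs of natural numbers with $k=m_1>m_2>\dots>m_t\ge0$, $m_j\ge l_j\ge0$, and $m=\sum_{j=1}^t\sum_{p=0}^{l_j}2^{m_j-p}$; $s_k(m)=|S_k(m)|$ (nonzero for only finitely many $k$), $s(m)=\sum_{k=0}^\infty s_k(m)$ for $m>0$, and $s(0)=1$. *)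

From HB Require Import structures.
From mathcomp Require Import all_boot all_order all_fingroup.
From mathcomp Require Import finmap.
From mathcomp Require Import boolp classical_sets cardinality fsbigop.

Set Implicit Arguments.
Unset Strict Implicit.
Unset Printing Implicit Defensive.

(* Indices: a permutation of [n] = {1..n} is a sigma : 'S_n acting on
   {0..n-1}; position i (1-based) is the ordinal i-1.  Order on values
   is preserved by this shift, so inversion counts are unchanged. *)

Definition cinv {n} (s : 'S_n) (i : 'I_n) : nat :=
  #|[set j : 'I_n | (i < j) && (s j < s i)]|.

(* k_i(sigma) = c_{n-i}(sigma), i = 0..n-1; the 1-based position n-i is the
   0-based ordinal n-1-i = rev_ord i. *)
Definition kinv {n} (s : 'S_n) (i : 'I_n) : nat := cinv s (rev_ord i).

(* LF_2(sigma) = sum_{i=0}^{n-1} (2^i - 2^(i - k_i(sigma)));  k_i <= i so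
   the truncated subtractions are exact. *)
Definition LF2 {n} (s : 'S_n) : nat :=
  \sum_(i < n) (2 ^ i - 2 ^ (i - kinv s i)).

(* iota_n(sigma) = (1, sigma(1)+1, ..., sigma(n)+1): fixes the first point
   and shifts everything else up by one. *)
Definition iota_S {n} (s : 'S_n) : 'S_n.+1 := lift_perm ord0 ord0 s.

Fixpoint iota_iter (k n : nat) (s : 'S_n) : 'S_(k + n) :=
  match k return 'S_(k + n) with
  | 0 => s
  | k'.+1 => iota_S (iota_iter k' s)
  end.

Definition pfun {n} (s : 'S_n) (i : nat) : nat :=
  oapp (fun j : 'I_n => nat_of_ord (s j)) i (insub i).

(* Direct limit of (S_n, iota_n)_{n>=1}: pairs (n, sigma) with n >= 1,
   modulo the identification of sigma with its iterated images. *)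
Definition Sigma := {n : nat & 'S_n}.

Definition dl_rel (x y : Sigma) : Prop :=
  exists k l, k + tag x = l + tag y /\
    pfun (iota_iter k (tagged x)) =1 pfun (iota_iter l (tagged y)).

Definition dl_class (x : Sigma) : set Sigma := [set y | 0 < tag y /\ dl_rel x y].

Definition Sinf : set (set Sigma) := [set dl_class x | x in [set x | 0 < tag x]].

(* { sigma in S_infinity : LF_2(sigma) = m } (LF_2 on S_infinity being the
   function induced by LF_2 on representatives) *)
Definition Sinf_LF (m : nat) : set (set Sigma) :=
  [set dl_class x | x in [set x : Sigma | 0 < tag x /\ LF2 (tagged x) = m]].

Definition Sk (k m : nat) : set (seq (nat * nat)) :=
  [set q | [/\ q <> [::], (head (0, 0) q).1 = k,
     sorted (fun a b : nat * nat => b.1 < a.1) q,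
     all (fun p : nat * nat => p.2 <= p.1) q &
     m = \sum_(p <- q) \sum_(0 <= r < p.2.+1) 2 ^ (p.1 - r)]].

Definition sk (k m : nat) : nat := #|` fset_set (Sk k m) |%fset.

Definition s (m : nat) : nat :=
  if m == 0 then 1 else \big[addn/0]_(k \in [set: nat]) sk k m.

From mathcomp Require Import all_boot all_fingroup.
From mathcomp Require Import boolp classical_sets cardinality.
From mathcomp Require Import fsbigop zify.

(* Extend the k-code of s in S_n by zeros to K_s = (k_0, k_1, ...).  Writing
   s = lift_perm ord0 a t, i.e. splitting off the image a of the first point,
   gives k_n = a and leaves K_t on the lower indices; by induction K_s
   determines s, and every K with K j <= j vanishing from n on is some K_s with
   s in S_n.  As iota_n only appends a zero, S_infinity is in bijection with
   finitely supported codes.  A nonzero k_i contributes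
   2^i - 2^(i - k_i) = 2^(i-1) + ... + 2^(i - k_i) to LF_2, the block described
   by the pair (i - 1, k_i - 1).  Listing these pairs by decreasing i identifies
   {sigma : LF_2(sigma) = m} with the sequences of pairs (a, b), b <= a, with
   decreasing first components and total value m; for m > 0 these are
   partitioned by their first component k < m into the sets S_k(m). *)

Set Implicit Arguments.
Unset Strict Implicit.
Unset Printing Implicit Defensive.

Lemma ltn_lift n (h : 'I_n.+1) (i j : 'I_n) : (lift h i < lift h j) = (i < j).
Proof. by rewrite /= !ltnNge leq_bump2. Qed.

Lemma card_ord_lt n a : a <= n -> #|[set i : 'I_n | i < a]| = a.
Proof.
move=> le_an; have -> : [set i : 'I_n | i < a] = widen_ord le_an @: [set: 'I_a].
  apply/setP=> i; rewrite !inE; apply/idP/imsetP => [lt_ia|[j _ ->]].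
    by exists (Ordinal lt_ia); rewrite ?inE //; apply: val_inj.
  exact: (ltn_ord j).
by rewrite card_imset ?cardsT ?card_ord // => i j [] /val_inj.
Qed.

Section LiftPerm.
Variables (n : nat) (a : 'I_n.+1) (t : 'S_n).
Let s := lift_perm ord0 a t.

Lemma cinv_lift_perm0 : cinv s ord0 = a.
Proof.
rewrite /cinv lift_perm_id.
have -> : [set j : 'I_n.+1 | (@ord0 n < j) && (s j < a)]
          = (s^-1)%g @: [set v : 'I_n.+1 | v < a].
  apply/setP=> j; rewrite !inE; apply/idP/imsetP => [/andP[_ lt_sja]|[v]].
    by exists (s j); rewrite ?inE ?permK.
  rewrite inE => lt_va ->; rewrite permKV lt_va andbT lt0n; apply: contraTN lt_va.
  move=> /eqP sv0; rewrite -[v](permKV s) (_ : (s^-1)%g v = ord0) ?lift_perm_id ?ltnn //.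
  exact: val_inj.
by rewrite card_imset ?card_ord_lt //; [exact: ltnW | exact: perm_inj].
Qed.

Lemma cinv_lift_perm_lift (i : 'I_n) : cinv s (lift ord0 i) = cinv t i.
Proof.
rewrite /cinv -[RHS](card_imset _ (@lift_inj _ ord0)); apply: eq_card => j.
rewrite inE; case: (unliftP ord0 j) => [j'|] ->.
  by rewrite mem_imset ?inE ?lift_perm_lift ?ltn_lift //; exact: lift_inj.
rewrite ltn0; apply/esym/imsetP => -[j' _] /eqP.
by rewrite (negbTE (neq_lift _ _)).
Qed.

End LiftPerm.

Lemma lift_perm0_surj n (s : 'S_n.+1) : exists a t, s = lift_perm ord0 a t.
Proof.
pose tf (k : 'I_n) := odflt k (unlift (s ord0) (s (lift ord0 k))).
have tfK k : lift (s ord0) (tf k) = s (lift ord0 k).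
  rewrite /tf; case: (unliftP (s ord0) (s (lift ord0 k))) => [u ->|] //.
  by move/perm_inj/eqP; rewrite eq_sym (negbTE (neq_lift _ _)).
have tf_inj : injective tf.
  move=> x y eq_xy; apply: (@lift_inj _ ord0); apply: (@perm_inj _ s).
  by rewrite -!tfK eq_xy.
exists (s ord0), (perm tf_inj); apply/permP => i.
by case: (unliftP ord0 i) => [k|] ->; rewrite (lift_perm_lift, lift_perm_id) // permE tfK.
Qed.

Definition kcode n (s : 'S_n) (j : nat) : nat := oapp (kinv s) 0 (insub j).

Lemma kcode_ge n (s : 'S_n) j : n <= j -> kcode s j = 0.
Proof. by move=> le_nj; rewrite /kcode insubF // ltnNge le_nj. Qed.

Lemma kcode_lt n (s : 'S_n) j (lt_jn : j < n) :
  kcode s j = cinv s (rev_ord (Ordinal lt_jn)).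
Proof. by rewrite /kcode insubT. Qed.

Lemma kcode_ord n (s : 'S_n) (i : 'I_n) : kcode s i = kinv s i.
Proof. by rewrite /kcode valK. Qed.

Lemma LF2_kcode n (s : 'S_n) : LF2 s = \sum_(i < n) (2 ^ i - 2 ^ (i - kcode s i)).
Proof. by apply: eq_bigr => i _; rewrite kcode_ord. Qed.

Lemma kcode_lift_perm0 n (a : 'I_n.+1) (t : 'S_n) j :
  kcode (lift_perm ord0 a t) j =
    if j < n then kcode t j else if j == n then val a else 0.
Proof.
case: (ltnP j n) => [lt_jn|le_nj].
  rewrite (kcode_lt _ (ltnW lt_jn : j < n.+1)) (kcode_lt _ lt_jn).
  rewrite -(cinv_lift_perm_lift a).
  by congr cinv; apply: val_inj; rewrite /= /bump /=; lia.
case: eqP => [->|ne_jn]; last by rewrite kcode_ge //; lia.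
rewrite (kcode_lt _ (ltnSn n)) -[X in _ = X](cinv_lift_perm0 a t).
by congr cinv; apply: val_inj; rewrite /= subnn.
Qed.

Lemma kcode_le n (s : 'S_n) j : kcode s j <= j.
Proof.
elim: n s j => [|n IHn] s j; first by rewrite kcode_ge.
have [a [t ->]] := lift_perm0_surj s.
rewrite kcode_lift_perm0; case: ifP => _; first exact: IHn.
by case: eqP => [->|_] //; exact: (ltn_ord a).
Qed.

Lemma kcode_inj n (s s' : 'S_n) : kcode s =1 kcode s' -> s = s'.
Proof.
elim: n s s' => [|n IHn] s s' eq_ss'; first by apply/permP => -[].
have [a [t def_s]] := lift_perm0_surj s; have [a' [t' def_s']] := lift_perm0_surj s'.
move: eq_ss'; rewrite {}def_s {}def_s' => eq_ss'.
have -> : a = a' by apply: val_inj; have := eq_ss' n; rewrite !kcode_lift_perm0 ltnn eqxx.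
suff -> : t = t' by [].
apply: IHn => j; case: (ltnP j n) => [lt_jn|le_nj].
  by have := eq_ss' j; rewrite !kcode_lift_perm0 lt_jn.
by rewrite !kcode_ge.
Qed.

Lemma kcode_surj n (K : nat -> nat) :
  (forall j, K j <= j) -> (forall j, n <= j -> K j = 0) -> exists s : 'S_n, kcode s =1 K.
Proof.
elim: n K => [|n IHn] K K_le K_ge; first by exists 1%g => j; rewrite kcode_ge ?K_ge.
have [t kcode_t] : exists t : 'S_n, kcode t =1 (fun j => if j < n then K j else 0).
  by apply: IHn => j; [case: ifP | move=> le_nj; rewrite ltnNge le_nj].
have lt_Kn : K n < n.+1 by rewrite ltnS.
exists (lift_perm ord0 (Ordinal lt_Kn) t) => j; rewrite kcode_lift_perm0 kcode_t /=.
case: (ltnP j n) => // le_nj; case: eqP => [-> //|ne_jn].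
by rewrite K_ge //; lia.
Qed.

Lemma kcode_iota n (s : 'S_n) : kcode (iota_S s) =1 kcode s.
Proof.
move=> j; rewrite kcode_lift_perm0; case: (ltnP j n) => // le_nj.
by rewrite kcode_ge ?if_same.
Qed.

Lemma kcode_iota_iter k n (s : 'S_n) : kcode (iota_iter k s) =1 kcode s.
Proof. by elim: k => [|k IHk] j //=; rewrite kcode_iota IHk. Qed.

Lemma pfun_ord n (s : 'S_n) (i : 'I_n) : pfun s i = s i.
Proof. by rewrite /pfun valK. Qed.

Lemma eq_pfun_kcode N N' (s : 'S_N) (s' : 'S_N') :
  N = N' -> pfun s =1 pfun s' <-> kcode s =1 kcode s'.
Proof.
move=> eq_NN'; subst N'; split => [eq_pfun|/kcode_inj -> //].
suff -> : s = s' by [].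
by apply/permP => i; apply: val_inj; have := eq_pfun i; rewrite !pfun_ord.
Qed.

Definition fst_gt : rel (nat * nat) := fun p p' => p'.1 < p.1.

Definition snd_le_fst (p : nat * nat) : bool := p.2 <= p.1.

Definition pairs_sum (q : seq (nat * nat)) : nat :=
  \sum_(p <- q) \sum_(0 <= r < p.2.+1) 2 ^ (p.1 - r).

Lemma fst_gt_trans : transitive fst_gt.
Proof. by move=> p' p p'' /= lt_p'p lt_p''p'; apply: ltn_trans lt_p''p' lt_p'p. Qed.

Fixpoint code_pairs (K : nat -> nat) (N : nat) : seq (nat * nat) :=
  if N is N'.+1 then
    if K N' == 0 then code_pairs K N' else (N'.-1, (K N').-1) :: code_pairs K N'
  else [::].

Fixpoint pairs_code (q : seq (nat * nat)) (j : nat) : nat :=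
  if q is p :: q' then if j == p.1.+1 then p.2.+1 else pairs_code q' j else 0.

Lemma eq_code_pairs K K' N :
  (forall j, j < N -> K j = K' j) -> code_pairs K N = code_pairs K' N.
Proof.
elim: N => [|N IHN] //= eqK; rewrite eqK // IHN // => j lt_jN.
by apply: eqK; apply: ltnW.
Qed.

Lemma code_pairs_pad K N M :
  (forall j, N <= j -> K j = 0) -> N <= M -> code_pairs K M = code_pairs K N.
Proof.
move=> K_ge; elim: M => [|M IHM]; first by rewrite leqn0 => /eqP ->.
rewrite leq_eqVlt => /orP[/eqP -> //|le_NM] /=.
by rewrite K_ge // eqxx IHM.
Qed.

Lemma sum_pow2_down i k :
  k <= i -> \sum_(0 <= r < k) 2 ^ (i.-1 - r) = 2 ^ i - 2 ^ (i - k).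
Proof.
elim: k => [|k IHk] le_ki; first by rewrite big_geq // subn0 subnn.
rewrite big_nat_recr //= IHk; last exact: ltnW.
have -> : i - k = (i.-1 - k).+1 by lia.
have -> : i - k.+1 = i.-1 - k by lia.
have : 2 ^ (i.-1 - k).+1 <= 2 ^ i by rewrite leq_exp2l //; lia.
rewrite expnS; lia.
Qed.

Section CodePairs.
Variable K : nat -> nat.
Hypothesis K_le : forall j, K j <= j.

Let K0 : K 0 = 0. Proof. by apply/eqP; rewrite -leqn0 K_le. Qed.

Lemma mem_code_pairs N (p : nat * nat) : p \in code_pairs K N -> p.1.+2 <= N.
Proof.
elim: N => [|N IHN] //=; case: eqP => [_ /IHN|]; first lia.
case: N IHN => [|N] IHN; first by rewrite K0.
by move=> _; rewrite inE => /orP[/eqP -> //|/IHN]; lia.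
Qed.

Lemma sorted_code_pairs N : sorted fst_gt (code_pairs K N).
Proof.
elim: N => [|N IHN] //=; case: eqP => // KN_neq0.
rewrite /= path_sortedE; last exact: fst_gt_trans.
rewrite IHN andbT; apply/allP => p /mem_code_pairs /=.
by case: N KN_neq0 {IHN} => [|N]; rewrite ?K0 //= /fst_gt; lia.
Qed.

Lemma code_pairsK N j : pairs_code (code_pairs K N) j = if j < N then K j else 0.
Proof.
elim: N => [|N IHN] //=.
have [KN0|KN_neq0] := eqVneq (K N) 0; rewrite /= IHN ltnS.
  by case: ltngtP => // ->.
have N_gt0 : 0 < N by case: N KN_neq0 {IHN}; rewrite ?K0.
have KN_gt0 : 0 < K N by rewrite lt0n.
by rewrite (prednK N_gt0) (prednK KN_gt0); case: ltngtP => // ->.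
Qed.

Lemma all_code_pairs N : all snd_le_fst (code_pairs K N).
Proof.
elim: N => [|N IHN] //=; case: eqP => //= KN_neq0.
by rewrite IHN andbT /snd_le_fst /=; have := K_le N; lia.
Qed.

Lemma pairs_sum_code_pairs N :
  pairs_sum (code_pairs K N) = \sum_(i < N) (2 ^ i - 2 ^ (i - K i)).
Proof.
elim: N => [|N IHN]; first by rewrite big_ord0 /pairs_sum big_nil.
rewrite big_ord_recr /= -IHN; case: eqP => [->|KN_neq0].
  by rewrite subn0 subnn addn0.
rewrite /pairs_sum big_cons addnC -sum_pow2_down ?K_le //=.
by have -> : (K N).-1.+1 = K N by lia.
Qed.

End CodePairs.

Lemma pairs_code_le q j : all snd_le_fst q -> pairs_code q j <= j.
Proof.
elim: q => [|p q IHq] //= /andP[le_p /IHq le_q].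
by case: eqP => // ->.
Qed.

Lemma pairs_code_ge q N j :
  all (fun p : nat * nat => p.1.+2 <= N) q -> N <= j -> pairs_code q j = 0.
Proof.
move=> + le_Nj; elim: q => [|p q IHq] //= /andP[lt_pN /IHq ->].
by case: eqP => // eq_j; lia.
Qed.

Lemma pairs_codeK q N :
  sorted fst_gt q -> all (fun p : nat * nat => p.1.+2 <= N) q ->
  code_pairs (pairs_code q) N = q.
Proof.
elim: q N => [|[a b] q IHq] N; first by elim: N => //= N ->.
rewrite /= path_sortedE; last exact: fst_gt_trans.
case/andP=> lt_qa sorted_q /andP[lt_aN _].
have lt_q : all (fun p : nat * nat => p.1.+2 <= a.+1) q.
  by apply: sub_all lt_qa => p /=; rewrite /fst_gt /=.
rewrite (code_pairs_pad (N := a.+2)) //; last first.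
  by move=> j lt_aj /=; rewrite (gtn_eqF lt_aj) (pairs_code_ge lt_q) //; lia.
have tail : code_pairs (pairs_code ((a, b) :: q)) a.+1 = q.
  rewrite -[RHS](IHq a.+1) //; apply: eq_code_pairs => j lt_ja /=.
  by rewrite ltn_eqF.
by rewrite -[in RHS]tail /= eqxx.
Qed.

Definition sigma_pairs (x : Sigma) : seq (nat * nat) :=
  code_pairs (kcode (tagged x)) (tag x).

Lemma sigma_pairsK x : pairs_code (sigma_pairs x) =1 kcode (tagged x).
Proof.
case: x => n s j; rewrite code_pairsK //=; last exact: kcode_le.
by case: ltnP => // le_nj; rewrite kcode_ge.
Qed.

Lemma sigma_pairs_eq x y :
  sigma_pairs x = sigma_pairs y <-> kcode (tagged x) =1 kcode (tagged y).
Proof.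
split=> [eq_xy j|]; first by rewrite -!sigma_pairsK eq_xy.
case: x y => [n s] [n' s'] /= eqK.
rewrite /sigma_pairs /= -(@code_pairs_pad _ n (n + n')) ?leq_addr //; last exact: kcode_ge.
rewrite -(@code_pairs_pad _ n' (n + n')) ?leq_addl //; last exact: kcode_ge.
by apply: eq_code_pairs => j _.
Qed.

Lemma dl_rel_kcode x y : dl_rel x y <-> kcode (tagged x) =1 kcode (tagged y).
Proof.
case: x y => [n s] [n' s'] /=; split=> [[k [l [/= eq_kl eq_pfun]]] j|eqK].
  rewrite -(kcode_iota_iter k) -(kcode_iota_iter l s').
  exact: (eq_pfun_kcode _ _ eq_kl).1 eq_pfun j.
exists n', n; split=> /=; first exact: addnC.
by apply/(eq_pfun_kcode _ _ (addnC n' n)) => j; rewrite !kcode_iota_iter.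
Qed.

Lemma pairs_sum_sigma x : pairs_sum (sigma_pairs x) = LF2 (tagged x).
Proof. by rewrite LF2_kcode pairs_sum_code_pairs //; exact: kcode_le. Qed.

Lemma sigma_pairs_surj N q :
  sorted fst_gt q -> all snd_le_fst q -> all (fun p : nat * nat => p.1.+2 <= N) q ->
  exists s : 'S_N, sigma_pairs (Tagged (fun n => 'S_n) s) = q.
Proof.
move=> sorted_q le_q lt_qN.
have [|s kcode_s] := @kcode_surj N (pairs_code q) (fun j => pairs_code_le j le_q).
  by move=> j; apply: pairs_code_ge lt_qN.
exists s; rewrite /sigma_pairs /= -[RHS](@pairs_codeK q N) //.
by apply: eq_code_pairs => j _; exact: kcode_s.
Qed.

Local Open Scope classical_set_scope.

Definition Spairs (m : nat) : set (seq (nat * nat)) :=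
  [set q | [/\ sorted fst_gt q, all snd_le_fst q & m = pairs_sum q]].

Definition pairs_class (q : seq (nat * nat)) : set Sigma :=
  [set x | 0 < tag x /\ sigma_pairs x = q].

Lemma pairs_sum_ge q (p : nat * nat) : p \in q -> 2 ^ p.1 <= pairs_sum q.
Proof.
rewrite /pairs_sum; elim: q => [|p' q IHq] //; rewrite inE big_cons.
case/orP=> [/eqP <-|/IHq le_pq]; last exact: leq_trans le_pq (leq_addl _ _).
by rewrite big_nat_recl // subn0 -addnA leq_addr.
Qed.

Lemma Spairs_fst_lt m q (p : nat * nat) : Spairs m q -> p \in q -> p.1 < m.
Proof.
case=> _ _ -> /pairs_sum_ge; apply: leq_trans.
exact: ltn_expl.
Qed.

Lemma dl_class_pairs x : dl_class x = pairs_class (sigma_pairs x).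
Proof.
apply/seteqP; split=> y [y_gt0 xy]; split=> //.
  by apply/esym/sigma_pairs_eq/dl_rel_kcode.
by apply/dl_rel_kcode/sigma_pairs_eq.
Qed.

Lemma Spairs_sigma m q :
  Spairs m q -> exists s : 'S_m.+1, sigma_pairs (Tagged (fun n => 'S_n) s) = q.
Proof.
move=> Sq; have [sorted_q le_q _] := Sq.
by apply: sigma_pairs_surj => //; apply/allP => p /(Spairs_fst_lt Sq).
Qed.

Lemma Sinf_LF_pairs m : Sinf_LF m = pairs_class @` Spairs m.
Proof.
apply/seteqP; split=> z [x].
  case=> x_gt0 LF2_x <-; rewrite dl_class_pairs; exists (sigma_pairs x) => //.
  split; [exact/sorted_code_pairs/kcode_le | exact/all_code_pairs/kcode_le |].
  by rewrite pairs_sum_sigma.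
move=> Sq <-; have [s def_q] := Spairs_sigma Sq.
exists (Tagged (fun n => 'S_n) s); last by rewrite dl_class_pairs def_q.
by split=> //; rewrite -pairs_sum_sigma def_q; case: Sq.
Qed.

Lemma pairs_class_inj m : {in Spairs m &, injective pairs_class}.
Proof.
move=> q q'; rewrite !in_setE => /Spairs_sigma [s def_q] _ eq_qq'.
have : pairs_class q' (Tagged (fun n => 'S_n) s) by rewrite -eq_qq'.
by case=> _ <-.
Qed.

Lemma card_Sinf_LF_Spairs m : (Sinf_LF m #= Spairs m)%card.
Proof. by rewrite Sinf_LF_pairs; apply/inj_card_eq/pairs_class_inj. Qed.

Lemma Spairs_finite m : finite_set (Spairs m).
Proof.
pose sigma_pairs_of (s : 'S_m.+1) := sigma_pairs (Tagged (fun n => 'S_n) s).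
apply: (sub_finite_set (B := sigma_pairs_of @` setT)); last exact/finite_image/finite_finset.
by move=> q /Spairs_sigma [s def_q]; exists s.
Qed.

Lemma Spairs0 : Spairs 0 = [set [::]].
Proof.
apply/seteqP; split=> [[|p q] // Sq|_ ->]; last by split; rewrite /pairs_sum ?big_nil.
by have := Spairs_fst_lt Sq (mem_head p q).
Qed.

Lemma Sk_Spairs k m : Sk k m `<=` Spairs m.
Proof. by move=> q []. Qed.

Lemma Sk_ge k m : m <= k -> Sk k m = set0.
Proof.
move=> le_mk; apply/seteqP; split=> // -[|p q] Skq; first by case: Skq.
have := Spairs_fst_lt (Sk_Spairs Skq) (mem_head p q); case: Skq => _ /= -> _ _ _.
by rewrite ltnNge le_mk.
Qed.

Lemma trivIset_Sk m : trivIset [set: nat] (Sk ^~ m).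
Proof. by move=> k k' _ _ [q [[_ <- _ _ _] [_ <- _ _ _]]]. Qed.

Lemma bigcup_Sk m : 0 < m -> \big[setU/set0]_(k < m) Sk k m = Spairs m.
Proof.
move=> m_gt0; rewrite -(bigcup_mkord m (Sk ^~ m)); apply/seteqP; split=> [q [k _]|].
  exact: Sk_Spairs.
case=> [|p q] Sq; first by case: Sq m_gt0 => _ _ ->; rewrite /pairs_sum big_nil.
exists p.1; first exact: Spairs_fst_lt Sq (mem_head p q).
by case: Sq.
Qed.

Lemma s_sum_sk m : 0 < m -> s m = \sum_(k < m) sk k m.
Proof.
move=> m_gt0; rewrite /s gtn_eqF // (fsbig_ord _ _ (sk ^~ m)).
apply/esym/fsbig_widen => // k [_ /negP]; rewrite -leqNgt => le_mk.
by rewrite /preimage /= /sk Sk_ge ?fset_set0.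
Qed.

Lemma card_Spairs m : (Spairs m #= `I_(s m))%card.
Proof.
have [->|m_gt0] := posnP m; first by rewrite Spairs0; exact: card_set1.
rewrite -(fset_setK (Spairs_finite m)); apply/card_eq_fsetP.
have Sk_finite k : finite_set (Sk k m).
  exact: sub_finite_set (@Sk_Spairs k m) (Spairs_finite m).
by rewrite s_sum_sk // /sk (trivIset_sum_card _ Sk_finite (@trivIset_Sk m)) bigcup_Sk.
Qed.

Theorem theorem4p5 (m : nat) : (Sinf_LF m #= `I_(s m))%card.
Proof. exact: card_eq_trans (card_Sinf_LF_Spairs m) (card_Spairs m). Qed.
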